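(* Let $R$ be a commutative ring and $S$ a multiplicative subset of $R$. If $R$ is a $u$-$S$-coherent ring with respect to some $s\in S$, then the localization $R_s=R[1/s]$ is a coherent ring.
   Context: An $R$-module $M$ is $u$-$S$-finitely presented with respect to $s\in S$ if there is an exact sequence $0\to T_1\to F\to M\to T_2\to 0$ with $F$ finitely presented and $sT_1=sT_2=0$. $R$ is a $u$-$S$-coherent ring with respect to $s\in S$ if every finitely generated ideal of $R$ is $u$-$S$-finitely presented with respect to $s$. *)

From HB Require Import structures.
From mathcomp Require Import all_boot all_order all_algebra.
Set Implicit Arguments. Unset Strict Implicit. Unset Printing Implicit Defensive.
Import GRing.Theory.
Local Open Scope ring_scope.

Section Defs.
Variable R : comPzRingType.

Definition mult_subset (S : R -> Prop) : Prop :=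
  S 1 /\ forall a b, S a -> S b -> S (a * b).

Definition ideal_gen (xs : seq R) : R -> Prop :=
  fun x => exists c : 'I_(size xs) -> R, x = \sum_(i < size xs) c i * xs`_i.

(* A submodule P of an R-module V (the module M "is" P) is finitely
   presented: there is an exact sequence R^m --a--> R^n --p--> M --> 0
   (p realised as a map into the ambient V with image exactly P). *)
Definition fin_presented_sub (V : lmodType R) (P : V -> Prop) : Prop :=
  exists (m n : nat) (a : {linear 'rV[R]_m -> 'rV[R]_n})
         (p : {linear 'rV[R]_n -> V}),
    (forall v, P (p v)) /\ (forall x, P x -> exists v, p v = x) /\
    (forall v, p v = 0 <-> exists u, a u = v).

Definition fin_presented (F : lmodType R) : Prop :=
  fin_presented_sub (fun _ : F => True).

(* Linear maps out of the submodule P of V (P seen as a module). *)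
Definition sublinear (V : lmodType R) (P : V -> Prop) (W : lmodType R)
    (h : {x : V | P x} -> W) : Prop :=
  forall (a : R) (x y z : {x : V | P x}),
    proj1_sig z = a *: proj1_sig x + proj1_sig y -> h z = a *: h x + h y.

(* The module M (= submodule P of V) is u-S-finitely presented with respect
   to s: there is an exact sequence 0 -> T1 -f-> F -g-> M -h-> T2 -> 0 with
   F finitely presented and s T1 = s T2 = 0. *)
Definition uS_fin_presented_sub (s : R) (V : lmodType R) (P : V -> Prop)
    : Prop :=
  exists (F T1 T2 : lmodType R) (f : {linear T1 -> F}) (g : {linear F -> V})
         (h : {x : V | P x} -> T2),
    fin_presented F /\
    sublinear h /\
    injective f /\
    (forall y, P (g y)) /\
    (forall y, g y = 0 <-> exists t, f t = y) /\
    (forall z, h z = 0 <-> exists y, g y = proj1_sig z) /\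
    (forall t, exists z, h z = t) /\
    (forall t : T1, s *: t = 0) /\
    (forall t : T2, s *: t = 0).

Definition uS_coherent (s : R) : Prop :=
  forall xs : seq R, uS_fin_presented_sub s (ideal_gen xs : R^o -> Prop).

Definition coherent : Prop :=
  forall xs : seq R, fin_presented_sub (ideal_gen xs : R^o -> Prop).

End Defs.

(* phi : R -> A exhibits A as the localization R[1/s]
   (characteristic conditions, as in Mathlib's IsLocalization.Away). *)
Definition is_localization_away (R A : comPzRingType) (s : R)
    (phi : {rmorphism R -> A}) : Prop :=
  [/\ exists b : A, phi s * b = 1,
      forall a : A, exists (r : R) (n : nat), a * phi s ^+ n = phi r &
      forall r : R, phi r = 0 -> exists n : nat, s ^+ n * r = 0].

From HB Require Import structures.
From mathcomp Require Import all_boot all_order all_algebra.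
From mathcomp Require Import ring.
Set Implicit Arguments. Unset Strict Implicit. Unset Printing Implicit Defensive.
Import GRing.Theory.
Local Open Scope ring_scope.

(* Write a finitely generated ideal (x_1, ..., x_k) of R as the image of
   R^n -> R, v |-> v Q for a column Q and its relations as the rows of a
   matrix M.  A u-S-finite presentation of the ideal yields Q and M such that
   Q generates the same ideal as the x_i up to multiplication by s, and M
   generates the relations of Q up to multiplication by s.  Applying
   phi : R -> R[1/s] makes s invertible, so phi M presents the ideal generated
   by phi Q, i.e. by the phi x_i; and every finitely generated ideal of R[1/s]
   is of this form, after clearing a common power of s from its generators. *)

Definition comb (A : comPzRingType) n (Q : 'cV[A]_n) : 'rV[A]_n -> A^o :=
  fun v => (v *m Q) 0 0.

Fact comb_is_linear (A : comPzRingType) n (Q : 'cV[A]_n) : linear (comb Q).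
Proof. by move=> a u v; rewrite /comb mulmxDl -scalemxAl !mxE. Qed.

HB.instance Definition _ (A : comPzRingType) n (Q : 'cV[A]_n) :=
  GRing.isLinear.Build A _ _ *:%R (comb Q) (comb_is_linear Q).

Definition presents_upto (A : comPzRingType) (s : A) m n
    (M : 'M[A]_(m, n)) (Q : 'cV[A]_n) : Prop :=
  M *m Q = 0 /\
  forall v : 'rV_n, v *m Q = 0 -> exists u : 'rV_m, u *m M = s *: v.

Section Combinations.
Variable A : comPzRingType.

Lemma mx11_eq0 (M : 'M[A]_1) : M = 0 <-> M 0 0 = 0.
Proof.
split=> [->|M00]; first by rewrite mxE.
by apply/matrixP=> i j; rewrite !ord1 M00 mxE.
Qed.

Lemma comb_eq0 n (Q : 'cV[A]_n) v : comb Q v = 0 <-> v *m Q = 0.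
Proof. by rewrite mx11_eq0. Qed.

Lemma comb_col n (q : {linear 'rV[A]_n -> A^o}) v :
  q v = comb (\col_j q (delta_mx 0 j)) v.
Proof.
rewrite {1}(row_sum_delta v) linear_sum /comb mxE.
by apply: eq_bigr => j _; rewrite linearZ !mxE.
Qed.

Lemma mulmx_eq0_comb m n (M : 'M[A]_(m, n)) (Q : 'cV[A]_n) :
  (forall u, comb Q (u *m M) = 0) -> M *m Q = 0.
Proof.
move=> MQ0; apply/matrixP=> i k; rewrite ord1.
have /comb_eq0 : comb Q (delta_mx 0 i *m M) = 0 by [].
by rewrite -mulmxA -rowE => /rowP/(_ 0); rewrite !mxE.
Qed.

Lemma col_in_comb_span k n (X : 'cV[A]_k) (Q : 'cV[A]_n) :
  (forall j, exists v, Q j 0 = comb X v) -> exists C, Q = C *m X.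
Proof.
move=> /fin_all_exists[V QV]; exists (\matrix_(j, i) V j 0 i).
apply/matrixP=> j k'; rewrite ord1 QV /comb !mxE; apply: eq_bigr => i _.
by rewrite !mxE.
Qed.

Lemma ideal_gen_map (B : comPzRingType) (F : B -> A) (rs : seq B) x :
  ideal_gen (map F rs) x <->
  exists v : 'rV_(size rs), x = comb (\col_i F rs`_i) v.
Proof.
rewrite /ideal_gen; move: (size (map F rs)) (size_map F rs) => k -> {k}.
split=> [[c ->]|[v ->]].
  exists (\row_i c i); rewrite /comb mxE; apply: eq_bigr => i _.
  by rewrite !mxE (nth_map 0).
exists (fun i => v 0 i); rewrite /comb mxE; apply: eq_bigr => i _.
by rewrite !mxE (nth_map 0).
Qed.

Lemma ideal_genP (xs : seq A) x :
  ideal_gen xs x <-> exists v : 'rV_(size xs), x = comb (\col_i xs`_i) v.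
Proof. by have := ideal_gen_map id xs x; rewrite map_id. Qed.

Lemma ideal_genZ (xs : seq A) (a : A) (x : A^o) :
  ideal_gen xs x -> ideal_gen xs (a *: x : A^o).
Proof.
move=> /ideal_genP[v ->]; apply/ideal_genP; exists (a *: v).
by rewrite linearZ.
Qed.

Lemma ideal_gen_nth (xs : seq A) (i : 'I_(size xs)) : ideal_gen xs xs`_i.
Proof.
apply/ideal_genP; exists (delta_mx 0 i).
by rewrite /comb -rowE !mxE.
Qed.

Lemma fin_presented_comb k (X : 'cV[A]_k) (P : A^o -> Prop) m n
    (M : 'M[A]_(m, n)) (Q : 'cV[A]_n) C D :
  (forall x, P x <-> exists v, x = comb X v) ->
  Q = C *m X -> X = D *m Q -> presents_upto 1 M Q -> fin_presented_sub P.
Proof.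
move=> PX QCX XDQ [MQ0 relQ].
exists m, n, (mulmxr M), (comb Q); split; [|split].
- by move=> v; apply/PX; exists (v *m C); rewrite QCX /comb -mulmxA.
- move=> x /PX[v ->]; exists (v *m D).
  by rewrite XDQ /comb mulmxA.
- move=> v; rewrite comb_eq0; split=> [/relQ[u]|[u <-]].
    by rewrite scale1r; exists u.
  by rewrite /= -mulmxA MQ0 mulmx0.
Qed.

End Combinations.

Lemma uS_fin_presented_free_approx (R : comPzRingType) (s : R) (V : lmodType R)
    (P : V -> Prop) :
  (forall a x, P x -> P (a *: x)) -> uS_fin_presented_sub s P ->
  exists m n (a : {linear 'rV[R]_m -> 'rV[R]_n}) (q : {linear 'rV[R]_n -> V}),
  [/\ forall u, q (a u) = 0, forall v, P (q v),
      forall x, P x -> exists v, q v = s *: x &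
      forall v, q v = 0 -> exists u, a u = s *: v].
Proof.
move=> PZ [F [T1 [T2 [f [g [h [[m [n [a [p [_ [p_onto p_ker]]]]]]
  [h_lin [_ [gP [g_ker [h_ker [_ [sT1 sT2]]]]]]]]]]]]]].
have h0 z : proj1_sig z = 0 -> h z = 0.
  move=> z0; have := h_lin (-1) z z z.
  by rewrite z0 scaler0 addr0 scaleN1r addNr => ->.
exists m, n, a, (g \o p); split=> /=.
- by move=> u; rewrite (p_ker _).2 ?linear0 //; exists u.
- by move=> v; apply: gP.
- move=> x Px.
  pose z0 := exist P (0 *: x) (PZ 0 x Px).
  pose zs := exist P (s *: x) (PZ s x Px).
  have zsE : proj1_sig zs = s *: x + proj1_sig z0 by rewrite /= scale0r addr0.
  have /(h_ker zs).1[y gy] : h zs = 0.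
    by rewrite (h_lin s (exist P x Px) z0 zs zsE) sT2 h0 ?addr0 //= scale0r.
  by have [v pv] := p_onto y I; exists v; rewrite pv gy.
- move=> v /g_ker[t ft]; apply/p_ker.
  by rewrite linearZ -ft -linearZ sT1 linear0.
Qed.

Lemma uS_fin_presented_ideal (R : comPzRingType) (s : R) (rs : seq R) :
  uS_fin_presented_sub s (ideal_gen rs : R^o -> Prop) ->
  exists m n (M : 'M[R]_(m, n)) (Q : 'cV[R]_n) C D,
    [/\ Q = C *m \col_(i < size rs) rs`_i,
        s *: \col_(i < size rs) rs`_i = D *m Q & presents_upto s M Q].
Proof.
move=> /(uS_fin_presented_free_approx (@ideal_genZ _ rs)).
move=> [m [n [a [q [qa0 qP q_onto q_rel]]]]].
pose Q := \col_j q (delta_mx 0 j); have qE v : q v = comb Q v := comb_col q v.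
have [C QC] : exists C, Q = C *m \col_(i < size rs) rs`_i.
  by apply: col_in_comb_span => j; apply/ideal_genP; rewrite mxE.
have [D XD] : exists D, s *: \col_(i < size rs) rs`_i = D *m Q.
  apply: col_in_comb_span => i; rewrite !mxE.
  by have [v qv] := q_onto _ (ideal_gen_nth i); exists v; rewrite -qE qv.
exists m, n, (lin1_mx a), Q, C, D; split=> //; split.
- apply: mulmx_eq0_comb => u; rewrite mul_rV_lin1.
  exact: etrans (esym (qE _)) (qa0 u).
- move=> v /comb_eq0 Qv0; have /q_rel[u au] : q v = 0 := etrans (qE v) Qv0.
  by exists u; rewrite mul_rV_lin1.
Qed.

Section Localization.
Variables (R A : comPzRingType) (s : R) (phi : {rmorphism R -> A}) (b : A).
Hypotheses (sb : phi s * b = 1)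
  (phi_frac : forall a : A, exists (r : R) (n : nat), a * phi s ^+ n = phi r)
  (phi_ker : forall r : R, phi r = 0 -> exists n : nat, s ^+ n * r = 0).

Lemma expr_sb e : phi s ^+ e * b ^+ e = 1.
Proof. by rewrite -exprMn sb expr1n. Qed.

Lemma common_denominator (I : finType) (w : I -> A) :
  exists (t : I -> R) (K : nat), forall i, w i = phi (t i) * b ^+ K.
Proof.
have /fin_all_exists[r /fin_all_exists[k wk]] := fun i => phi_frac (w i).
pose K := (\max_i k i)%N.
exists (fun i => r i * s ^+ (K - k i)), K => i.
rewrite rmorphM rmorphXn -wk -(subnK (leq_bigmax i : k i <= K)%N).
move: (K - k i)%N => e; rewrite addnK exprD.
transitivity (w i * (phi s ^+ e * b ^+ e) * (phi s ^+ k i * b ^+ k i)).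
  by rewrite !expr_sb !mulr1.
ring.
Qed.

Lemma seq_common_denominator (ys : seq A) :
  exists (N : nat) (rs : seq R), ys = map (fun r => phi r * b ^+ N) rs.
Proof.
have [t [K wt]] := common_denominator (fun i : 'I_(size ys) => ys`_i).
exists K, [seq t i | i <- enum 'I_(size ys)].
rewrite -map_comp -{1}(mkseq_nth 0 ys) /mkseq -val_enum_ord -map_comp.
by apply: eq_map => i /=; apply: wt.
Qed.

Lemma row_common_denominator n (w : 'rV[A]_n) :
  exists (t : 'rV[R]_n) (K : nat), w = b ^+ K *: map_mx phi t.
Proof.
have [t [K wt]] := common_denominator (fun j => w 0 j).
by exists (\row_j t j), K; apply/rowP=> j; rewrite !mxE wt mulrC.
Qed.

(* A relation of phi Q is b^K phi t with s^e t a relation of Q. *)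
Lemma presents_upto_map m n (M : 'M[R]_(m, n)) (Q : 'cV[R]_n) :
  presents_upto s M Q -> presents_upto 1 (map_mx phi M) (map_mx phi Q).
Proof.
move=> [MQ0 relQ]; split; first by rewrite -map_mxM MQ0 map_mx0.
move=> w wQ0; have [t [K wE]] := row_common_denominator w.
have /phi_ker[e etQ0] : phi ((t *m Q) 0 0) = 0.
  have : phi s ^+ K *: (w *m map_mx phi Q) = 0 by rewrite wQ0 scaler0.
  rewrite wE -scalemxAl scalerA expr_sb scale1r -map_mxM.
  by move=> /mx11_eq0; rewrite mxE.
have [u uM] : exists u, u *m M = s *: (s ^+ e *: t).
  by apply: relQ; apply/mx11_eq0; rewrite -scalemxAl mxE etQ0.
exists (b ^+ (K + e.+1) *: map_mx phi u).
rewrite -scalemxAl -map_mxM uM !map_mxZ !scalerA scale1r wE; congr (_ *: _).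
rewrite rmorphXn -mulrA -exprS exprD -mulrA [b ^+ e.+1 * _]mulrC.
by rewrite expr_sb mulr1.
Qed.

End Localization.

Theorem proposition3p14 (R : comPzRingType) (S : R -> Prop) (s : R) :
  mult_subset S -> S s -> uS_coherent s ->
  forall (A : comPzRingType) (phi : {rmorphism R -> A}),
    is_localization_away s phi -> coherent A.
Proof.
move=> _ _ coh A phi [[b sb] phi_frac phi_ker] ys.
have [N [rs ->]] := seq_common_denominator sb phi_frac ys.
have [m [n [M [Q [C [D [QC XD MQ]]]]]]] := uS_fin_presented_ideal (coh rs).
pose X := \col_(i < size rs) (phi rs`_i * b ^+ N).
have XE : X = b ^+ N *: map_mx phi (\col_(i < size rs) rs`_i).
  by apply/matrixP=> i j; rewrite !mxE mulrC.
have QX : map_mx phi Q = (phi s ^+ N *: map_mx phi C) *m X.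
  by rewrite XE QC map_mxM -scalemxAl -scalemxAr scalerA (expr_sb sb) scale1r.
have XQ : X = (b ^+ N.+1 *: map_mx phi D) *m map_mx phi Q.
  rewrite XE -scalemxAl -map_mxM -XD map_mxZ scalerA.
  by rewrite exprSr -mulrA [b * _]mulrC sb mulr1.
apply: (fin_presented_comb _ QX XQ (presents_upto_map sb phi_frac phi_ker MQ)).
exact: ideal_gen_map.
Qed.
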